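(* In the Standing Setup with $R=-v(X-w)$ ($v,w\in\mathbb F$), for every $h\in\mathbb Z$: $$d_{h-1}d_h^2d_{h+1}^2d_{h+2}=v^2\bigl(w_h-wv_h+w^2\bigr).$$
   Context: Standing Setup. $\mathbb F$ is a field of characteristic not $2$ or $3$; $f,g\in\mathbb F$; $A=X^3+fX+g\in\mathbb F[X]$; $R\in\mathbb F[X]$ is a polynomial of degree at most $2$; $D=A^2+4R$; $Y$ satisfies $Y^2=D(X)$, $Z=\tfrac12(Y+A)$ and $\overline Z=\tfrac12(-Y+A)$, so $Z+\overline Z=A$ and $Z\overline Z=-R$. We are given sequences $(u_h),(v_h),(w_h),(d_h),(e_h)$ of elements of $\mathbb F$ indexed by $h\in\mathbb Z$, with all $u_h\neq0$, such that for every $h\in\mathbb Z$ the following two identities hold in $\mathbb F[X]$: (i) $A+d_h(X+e_h)+d_{h+1}(X+e_{h+1})=(X+v_h)(X^2-v_hX+w_h)$; (ii) $-u_hu_{h+1}(X^2-v_hX+w_h)(X^2-v_{h+1}X+w_{h+1})=d_{h+1}^2(X+e_{h+1})^2+d_{h+1}(X+e_{h+1})A-R$. (These say that $Z_h=\bigl(Z+d_h(X+e_h)\bigr)/\bigl(u_h(X^2-v_hX+w_h)\bigr)$ are consecutive complete quotients of a continued fraction expansion with partial quotients $(X+v_h)/u_h$.) *)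

From HB Require Import structures.
From mathcomp Require Import all_boot all_order all_algebra.
Set Implicit Arguments.
Unset Strict Implicit.
Unset Printing Implicit Defensive.

From HB Require Import structures.
From mathcomp Require Import all_boot all_order all_algebra.
From mathcomp Require Import ring.
Import GRing.Theory.
Set Implicit Arguments.
Unset Strict Implicit.
Local Open Scope ring_scope.

(* Comparing coefficients turns (i) and (ii) into scalar equations.  Since
   d_(h+1) = - u_h u_(h+1) is a unit, (ii) at step h gives e_(h+1), a linear
   relation between w_h and w_(h+1), and explicit expressions for v and v w.
   Feeding in (i) at h-1, h, h+1 (which give w_k and g) and (ii) at h-1, the
   claim becomes a polynomial identity once d_(h-1), d_(h+2), g, v and v w are
   eliminated. *)

Lemma eq_of_subr_eq (V : zmodType) (a b c d : V) : a - b = c - d -> c = d -> a = b.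
Proof. by move=> E cd; apply/eqP; rewrite -subr_eq0 E cd subrr. Qed.

Section QuarticCoefficients.

Variable R : comNzRingType.

Definition quartic (c0 c1 c2 c3 c4 : R) : {poly R} :=
  c0%:P + c1%:P * 'X + c2%:P * 'X^2 + c3%:P * 'X^3 + c4%:P * 'X^4.

Lemma quartic_inj (a0 a1 a2 a3 a4 b0 b1 b2 b3 b4 : R) :
  quartic a0 a1 a2 a3 a4 = quartic b0 b1 b2 b3 b4 ->
  [/\ a0 = b0, a1 = b1, a2 = b2, a3 = b3 & a4 = b4].
Proof.
move=> E; have c k := congr1 (fun p : {poly R} => p`_k) E.
move: (c 0%N) (c 1%N) (c 2%N) (c 3%N) (c 4%N); rewrite /quartic /= !coefE /=.
by rewrite !(mulr0, mulr1, addr0, add0r) => -> -> -> -> ->.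
Qed.

Lemma cubic_step_coef (f g dk ek dl el a c : R) :
  'X^3 + f%:P * 'X + g%:P + dk%:P * ('X + ek%:P) + dl%:P * ('X + el%:P)
    = ('X + a%:P) * ('X^2 - a%:P * 'X + c%:P) ->
  c = f + dk + dl + a ^+ 2 /\ g + dk * ek + dl * el = a * c.
Proof.
move=> E.
have : quartic (g + dk * ek + dl * el) (f + dk + dl) 0 1 0
     = quartic (a * c) (c - a ^+ 2) 0 1 0.
  transitivity ('X^3 + f%:P * 'X + g%:P + dk%:P * ('X + ek%:P) + dl%:P * ('X + el%:P)).
    by rewrite /quartic !(rmorphD, rmorphM) /= polyC0 polyC1; ring.
  by rewrite E /quartic !(rmorphD, rmorphM, rmorphB, rmorphXn) /= polyC0 polyC1; ring.
case/quartic_inj=> -> c1 _ _ _; split=> //.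
by apply: (eq_of_subr_eq _ (esym c1)); ring.
Qed.

End QuarticCoefficients.

Lemma quadratic_pair_coef (R : idomainType) (f g v w U a b c c' dd ee : R) :
  U != 0 ->
  - U%:P * ('X^2 - a%:P * 'X + c%:P) * ('X^2 - b%:P * 'X + c'%:P)
    = (dd ^+ 2)%:P * ('X + ee%:P) ^+ 2
      + dd%:P * ('X + ee%:P) * ('X^3 + f%:P * 'X + g%:P) - (- v%:P * ('X - w%:P)) ->
  [/\ dd = - U, ee = - (a + b), c + c' + a * b = dd + f,
      v = - dd * (a * c' + b * c) - 2%:R * dd ^+ 2 * ee - dd * g - dd * ee * f
    & v * w = dd ^+ 2 * ee ^+ 2 + dd * ee * g - dd * (c * c')].
Proof.
move=> U0 E.
have : quartic (- U * (c * c')) (U * (a * c' + b * c)) (- U * (c + c' + a * b))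
         (U * (a + b)) (- U)
     = quartic (dd ^+ 2 * ee ^+ 2 + dd * ee * g - v * w)
         (2%:R * dd ^+ 2 * ee + dd * g + dd * ee * f + v) (dd ^+ 2 + dd * f)
         (dd * ee) dd.
  transitivity (- U%:P * ('X^2 - a%:P * 'X + c%:P) * ('X^2 - b%:P * 'X + c'%:P)).
    by rewrite /quartic !(rmorphD, rmorphM, rmorphN) /=; ring.
  by rewrite E /quartic !(rmorphD, rmorphM, rmorphB, rmorphN, rmorphXn) /= ?rmorph_nat; ring.
case/quartic_inj=> c0 c1 c2 c3 dE; rewrite dE in c0 c2.
have dd0 : dd != 0 by rewrite -dE oppr_eq0.
have UE : U = - dd by rewrite -dE opprK.
rewrite {}UE in c1 c3; split=> //.
- by apply: (mulfI dd0); rewrite -c3; ring.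
- by apply: (mulfI dd0); rewrite c2; ring.
- by apply: (eq_of_subr_eq _ (esym c1)); ring.
- by apply: (eq_of_subr_eq _ c0); ring.
Qed.

Lemma three_step_identity (R : comPzRingType)
    (f g v w d0 d1 d2 d3 v0 v1 v2 w0 w1 w2 e1 e2 : R) :
  w0 = f + d0 + d1 + v0 ^+ 2 -> w1 = f + d1 + d2 + v1 ^+ 2 ->
  w2 = f + d2 + d3 + v2 ^+ 2 -> g + d1 * e1 + d2 * e2 = v1 * w1 ->
  e1 = - (v0 + v1) -> e2 = - (v1 + v2) ->
  w0 + w1 + v0 * v1 = d1 + f -> w1 + w2 + v1 * v2 = d2 + f ->
  v = - d2 * (v1 * w2 + v2 * w1) - 2%:R * d2 ^+ 2 * e2 - d2 * g - d2 * e2 * f ->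
  v * w = d2 ^+ 2 * e2 ^+ 2 + d2 * e2 * g - d2 * (w1 * w2) ->
  d0 * d1 ^+ 2 * d2 ^+ 2 * d3 = v ^+ 2 * (w1 - w * v1 + w ^+ 2).
Proof.
move=> w0E w1E w2E gE e1E e2E s1E s2E vE vwE; subst w0 w1 w2 e1 e2.
have {}gE : g = v1 * (f + d1 + d2 + v1 ^+ 2) + d1 * (v0 + v1) + d2 * (v1 + v2).
  by apply: (eq_of_subr_eq _ gE); ring.
have d0E : d0 = - (f + d1 + d2 + v0 ^+ 2 + v0 * v1 + v1 ^+ 2).
  by apply: (eq_of_subr_eq _ s1E); ring.
have d3E : d3 = - (f + d1 + d2 + v1 ^+ 2 + v1 * v2 + v2 ^+ 2).
  by apply: (eq_of_subr_eq _ s2E); ring.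
(* Only the product v w is known, not w itself. *)
have -> : v ^+ 2 * (f + d1 + d2 + v1 ^+ 2 - w * v1 + w ^+ 2)
    = (v * w) ^+ 2 - v1 * v * (v * w) + v ^+ 2 * (f + d1 + d2 + v1 ^+ 2) by ring.
by rewrite vwE vE gE d0E d3E; ring.
Qed.

Theorem mainTheorem8 (F : fieldType)
  (hchar2 : (2%:R : F) != 0) (hchar3 : (3%:R : F) != 0)
  (f g v w : F) (A R : {poly F})
  (hA : A = 'X^3 + f%:P * 'X + g%:P)
  (hR : R = - v%:P * ('X - w%:P))
  (u vs ws d e : int -> F)
  (hu : forall h : int, u h != 0)
  (hi : forall h : int,
     A + (d h)%:P * ('X + (e h)%:P) + (d (h + 1))%:P * ('X + (e (h + 1))%:P)
     = ('X + (vs h)%:P) * ('X^2 - (vs h)%:P * 'X + (ws h)%:P))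
  (hii : forall h : int,
     - (u h * u (h + 1))%:P * ('X^2 - (vs h)%:P * 'X + (ws h)%:P)
       * ('X^2 - (vs (h + 1))%:P * 'X + (ws (h + 1))%:P)
     = (d (h + 1) ^+ 2)%:P * ('X + (e (h + 1))%:P) ^+ 2
       + (d (h + 1))%:P * ('X + (e (h + 1))%:P) * A - R) :
  forall h : int,
    d (h - 1) * d h ^+ 2 * d (h + 1) ^+ 2 * d (h + 2)
    = v ^+ 2 * (ws h - w * vs h + w ^+ 2).
Proof.
move=> h; subst A R.
have hu2 k : u k * u (k + 1) != 0 by rewrite mulf_neq0.
have [w0E _] := cubic_step_coef (hi (h - 1)).
have [w1E gE] := cubic_step_coef (hi h).
have [w2E _] := cubic_step_coef (hi (h + 1)).
have [_ e1E s1E _ _] := quadratic_pair_coef (hu2 (h - 1)) (hii (h - 1)).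
have [_ e2E s2E vE vwE] := quadratic_pair_coef (hu2 h) (hii h).
rewrite subrK in w0E e1E s1E; rewrite -[h + 1 + 1]addrA in w2E.
exact: (three_step_identity w0E w1E w2E gE e1E e2E s1E s2E vE vwE).
Qed.
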